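(* Let $H$ be a Hopf algebra over $\mathbb{C}$ and let $B=A^{coH}\subseteq A$ be an $H$-Hopf–Galois extension, with $A$ faithfully flat as a left $B$-module, and suppose $B$ is contained in the centre of $A$. Then $\mathrm{Aut}_H(A)$ is a group with respect to the product $F\cdot G:=G\circ F$ (unit $\mathrm{id}_A$). For $F\in\mathrm{Aut}_H(A)$ and $a\in A$, the element $a_{(0)}F(a_{(1)}^{\langle 1\rangle})\otimes_B a_{(1)}^{\langle 2\rangle}\in A\otimes_B A$ lies in (the image of) $B\otimes_B A$, and the inverse of $F$ is the map $$F^{-1}(a)=(F|_B)^{-1}\big(a_{(0)}F(a_{(1)}^{\langle 1\rangle})\big)\,a_{(1)}^{\langle 2\rangle},$$ i.e. $F^{-1}=m\circ((F|_B)^{-1}\otimes\mathrm{id})\circ(m\otimes\mathrm{id})\circ(\mathrm{id}\otimes F\otimes_B\mathrm{id})\circ(\mathrm{id}\otimes\tau)\circ\delta^A$, and it belongs to $\mathrm{Aut}_H(A)$. Moreover $\mathrm{Aut}_{ver}(A)$ is a subgroup of $\mathrm{Aut}_H(A)$.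
   Context: All algebras are unital and associative over $\mathbb{C}$; Sweedler notation with implicit summation is used. $H$ is a Hopf algebra with coproduct $\Delta(h)=h_{(1)}\otimes h_{(2)}$, counit $\epsilon$, antipode $S$. $A$ is a right $H$-comodule algebra with coaction $\delta^A(a)=a_{(0)}\otimes a_{(1)}$ (an algebra map), and $B=A^{coH}=\{b\in A:\delta^A(b)=b\otimes 1_H\}$. The extension $B\subseteq A$ is $H$-Hopf–Galois if the canonical map $\chi:A\otimes_B A\to A\otimes H$, $a'\otimes_B a\mapsto a'a_{(0)}\otimes a_{(1)}$, is bijective; the translation map is $\tau:H\to A\otimes_B A$, $\tau(h)=\chi^{-1}(1_A\otimes h)=:h^{\langle 1\rangle}\otimes_B h^{\langle 2\rangle}$. $m$ denotes multiplication of $A$. $\mathrm{Aut}_H(A)$ is the set of unital algebra maps $F:A\to A$ that are right $H$-comodule maps ($\delta^A\circ F=(F\otimes\mathrm{id})\circ\delta^A$) and whose restriction $F|_B$ is an algebra automorphism of $B$. $\mathrm{Aut}_{ver}(A)=\{F\in\mathrm{Aut}_H(A): F|_B=\mathrm{id}_B\}$. *)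

(* Tensors are represented by finite sums of pure tensors (seq of pairs),
   with equality in a tensor product defined by its universal property:
   two representatives are equal iff every (balanced) bilinear map into
   every k-vector space takes the same value on them. *)
From HB Require Import structures.
From mathcomp Require Import all_boot all_order all_algebra.
From mathcomp Require Import reals complex.
Set Implicit Arguments. Unset Strict Implicit. Unset Printing Implicit Defensive.
Import Order.TTheory GRing.Theory Num.Theory.
Local Open Scope ring_scope.

Section Tensors.
Variable k : fieldType.

Definition bilin (U V W : lmodType k) (f : U -> V -> W) : Prop :=
  (forall (a : k) u u' v, f (a *: u + u') v = a *: f u v + f u' v) /\
  (forall (a : k) u v v', f u (a *: v + v') = a *: f u v + f u v').

Definition trilin (U V X W : lmodType k) (f : U -> V -> X -> W) : Prop :=
  (forall (a : k) u u' v x, f (a *: u + u') v x = a *: f u v x + f u' v x) /\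
  (forall (a : k) u v v' x, f u (a *: v + v') x = a *: f u v x + f u v' x) /\
  (forall (a : k) u v x x', f u v (a *: x + x') = a *: f u v x + f u v x').

Definition teq (U V : lmodType k) (s t : seq (U * V)) : Prop :=
  forall (W : lmodType k) (f : U -> V -> W), bilin f ->
    \sum_(p <- s) f p.1 p.2 = \sum_(p <- t) f p.1 p.2.

Definition teq3 (U V X : lmodType k) (s t : seq (U * V * X)) : Prop :=
  forall (W : lmodType k) (f : U -> V -> X -> W), trilin f ->
    \sum_(p <- s) f p.1.1 p.1.2 p.2 = \sum_(p <- t) f p.1.1 p.1.2 p.2.

(* For an algebra A, a subset P of A (playing the role of the subalgebra B)
   and a k-vector space M with a right "P-action" act, equality in
   M (x)_B A: equality under all B-balanced k-bilinear maps. *)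
Definition teqM (A : algType k) (P : A -> Prop) (M : lmodType k)
    (act : M -> A -> M) (s t : seq (M * A)) : Prop :=
  forall (W : lmodType k) (f : M -> A -> W), bilin f ->
    (forall m a b, P b -> f (act m b) a = f m (b * a)) ->
    \sum_(p <- s) f p.1 p.2 = \sum_(p <- t) f p.1 p.2.

Definition teqB (A : algType k) (P : A -> Prop) (s t : seq (A * A)) : Prop :=
  @teqM A P A (fun x b => x * b) s t.

(* A (x)_B A where the right B-action on the first factor is twisted by F,
   x . b := x * F b ; this is the target of  F (x)_B id. *)
Definition teqBtw (A : algType k) (P : A -> Prop) (F : A -> A)
    (s t : seq (A * A)) : Prop :=
  @teqM A P A (fun x b => x * F b) s t.

Definition rmod_axioms (A : algType k) (P : A -> Prop) (M : lmodType k)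
    (act : M -> A -> M) : Prop :=
  [/\ forall m b b', P b -> P b' -> act m (b * b') = act (act m b) b',
      forall m, act m 1 = m,
      forall (a : k) m m' b, P b -> act (a *: m + m') b = a *: act m b + act m' b
    & forall (a : k) m b b', P b -> P b' ->
        act m (a *: b + b') = a *: act m b + act m b'].

Definition rmod_hom (A : algType k) (P : A -> Prop) (M N : lmodType k)
    (actM : M -> A -> M) (actN : N -> A -> N) (f : M -> N) : Prop :=
  (forall (a : k) m m', f (a *: m + m') = a *: f m + f m') /\
  (forall m b, P b -> f (actM m b) = actN (f m) b).

(* A is faithfully flat as a left B-module: a sequence M' -> M -> M'' of
   right B-modules is exact iff M' (x)_B A -> M (x)_B A -> M'' (x)_B A is. *)
Definition faithfully_flat (A : algType k) (P : A -> Prop) : Prop :=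
  forall (M1 M2 M3 : lmodType k) (act1 : M1 -> A -> M1) (act2 : M2 -> A -> M2)
    (act3 : M3 -> A -> M3) (f : M1 -> M2) (g : M2 -> M3),
    rmod_axioms P act1 -> rmod_axioms P act2 -> rmod_axioms P act3 ->
    rmod_hom P act1 act2 f -> rmod_hom P act2 act3 g ->
    ((forall m, g m = 0 <-> exists m', f m' = m) <->
     (forall s : seq (M2 * A),
        @teqM A P M3 act3 [seq (g p.1, p.2) | p <- s] [::] <->
        exists s' : seq (M1 * A),
          @teqM A P M2 act2 [seq (f p.1, p.2) | p <- s'] s)).

(* Hopf algebra structure (Delta, eps, S) on H, Sweedler-style:
   Delta h is a representative of Delta(h) = h_(1) (x) h_(2). *)
Definition is_hopf (H : algType k) (Delta : H -> seq (H * H)) (eps : H -> k)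
    (S : H -> H) : Prop :=
  [/\
      forall (a : k) x y, teq (Delta (a *: x + y))
                             ([seq (a *: p.1, p.2) | p <- Delta x] ++ Delta y),
      forall h, teq3 [seq (q.1, q.2, p.2) | p <- Delta h, q <- Delta p.1]
                     [seq (p.1, q.1, q.2) | p <- Delta h, q <- Delta p.2],
      (forall h, \sum_(p <- Delta h) eps p.1 *: p.2 = h /\
                 \sum_(p <- Delta h) eps p.2 *: p.1 = h) /\
      ((forall x y, teq (Delta (x * y))
                       [seq (p.1 * q.1, p.2 * q.2) | p <- Delta x, q <- Delta y])
        /\ teq (Delta 1) [:: (1, 1)]),
      [/\ forall (a : k) x y, eps (a *: x + y) = a * eps x + eps y,
          forall x y, eps (x * y) = eps x * eps y & eps 1 = 1]
    &
      (forall (a : k) x y, S (a *: x + y) = a *: S x + S y) /\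
      (forall h, \sum_(p <- Delta h) S p.1 * p.2 = eps h *: 1 /\
                 \sum_(p <- Delta h) p.1 * S p.2 = eps h *: 1) ].

Definition is_comod_alg (H A : algType k) (Delta : H -> seq (H * H))
    (eps : H -> k) (delta : A -> seq (A * H)) : Prop :=
  [/\ forall (a : k) x y, teq (delta (a *: x + y))
                             ([seq (a *: p.1, p.2) | p <- delta x] ++ delta y),
      forall x, teq3 [seq (q.1, q.2, p.2) | p <- delta x, q <- delta p.1]
                     [seq (p.1, q.1, q.2) | p <- delta x, q <- Delta p.2],
      forall x, \sum_(p <- delta x) eps p.2 *: p.1 = x,
      forall x y, teq (delta (x * y))
                      [seq (p.1 * q.1, p.2 * q.2) | p <- delta x, q <- delta y]
    & teq (delta 1) [:: (1, 1)] ].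

Definition coinv (H A : algType k) (delta : A -> seq (A * H)) (b : A) : Prop :=
  teq (delta b) [:: (b, 1)].

Definition chi (H A : algType k) (delta : A -> seq (A * H)) (s : seq (A * A))
  : seq (A * H) := [seq (p.1 * q.1, q.2) | p <- s, q <- delta p.2].

Definition hopf_galois (H A : algType k) (delta : A -> seq (A * H)) : Prop :=
  let P := coinv delta in
  [/\ forall s t, teqB P s t -> teq (chi delta s) (chi delta t),
      forall s t, teq (chi delta s) (chi delta t) -> teqB P s t
    & forall u : seq (A * H), exists s, teq (chi delta s) u].

(* tau is (a choice of representatives of) the translation map *)
Definition translation_map (H A : algType k) (delta : A -> seq (A * H))
    (tau : H -> seq (A * A)) : Prop :=
  forall h, teq (chi delta (tau h)) [:: (1, h)].

Definition AutH (H A : algType k) (delta : A -> seq (A * H)) (F : A -> A)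
  : Prop :=
  let P := coinv delta in
  [/\ forall (a : k) x y, F (a *: x + y) = a *: F x + F y,
      forall x y, F (x * y) = F x * F y,
      F 1 = 1,
      forall x, teq (delta (F x)) [seq (F p.1, p.2) | p <- delta x]
    & [/\ forall b, P b -> P (F b),
          forall b b', P b -> P b' -> F b = F b' -> b = b'
        & forall b, P b -> exists b', P b' /\ F b' = b] ].

Definition Autver (H A : algType k) (delta : A -> seq (A * H)) (F : A -> A)
  : Prop := AutH delta F /\ forall b, coinv delta b -> F b = b.

Definition Xelt (H A : algType k) (delta : A -> seq (A * H))
    (tau : H -> seq (A * A)) (F : A -> A) (a : A) : seq (A * A) :=
  [seq (p.1 * F q.1, q.2) | p <- delta a, q <- tau p.2].

End Tensors.

(* F in Aut_H(A) is B-semilinear, hence a B-linear map A' -> A, where A' is A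
   with its right B-action twisted by (F|_B)^-1.  By faithful flatness F is
   bijective as soon as F (x)_B id : A' (x)_B A -> A (x)_B A is, and the latter
   has the explicit inverse
     z (x) x |-> z_(1)^<2> (x) x z_(0) F(z_(1)^<1>),
   which is well defined because B is central (so A (x)_B A is symmetric).
   Applying F (x) id to a_(0) a_(1)^<1> (x)_B a_(1)^<2> = 1 (x)_B a at F^-1(a)
   shows that the element of the statement is F(1) (x) F^-1(a); conversely, for
   any representative sum_i F(b_i) (x) a_i of it, multiplying out after
   F^-1 (x) id and using h^<1> h^<2> = eps(h) 1 gives F^-1(a) = sum_i b_i a_i. *)

From HB Require Import structures.
From mathcomp Require Import all_boot all_order all_algebra.
From mathcomp Require Import reals complex.
From Stdlib Require Import ClassicalEpsilon.
Set Implicit Arguments. Unset Strict Implicit. Unset Printing Implicit Defensive.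
Import Order.TTheory GRing.Theory Num.Theory.
Local Open Scope ring_scope.

Local Notation tmap f s := [seq (f p.1, p.2) | p <- s].

Section HopfGaloisAutomorphisms.
Variable k : fieldType.

Section LinearFacts.
Variables (U V : lmodType k) (f : U -> V) (f_lin : linear f).
Let fL : {linear U -> V} := HB.pack f (GRing.isLinear.Build k U V *:%R f f_lin).

Lemma lin0 : f 0 = 0. Proof. exact: linear0 fL. Qed.
Lemma linB x y : f (x - y) = f x - f y. Proof. exact: raddfB fL x y. Qed.
Lemma linZ a x : f (a *: x) = a *: f x. Proof. exact: linearZZ fL a x. Qed.
Lemma lin_sum (I : Type) (r : seq I) (F : I -> U) :
  f (\sum_(i <- r) F i) = \sum_(i <- r) f (F i).
Proof. exact: (@linear_sum _ _ _ _ fL I r xpredT F). Qed.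
End LinearFacts.

Lemma linear_comp (U V X : lmodType k) (phi : U -> V) (psi : V -> X) :
  linear phi -> linear psi -> linear (psi \o phi).
Proof. by move=> phi_lin psi_lin a x y /=; rewrite phi_lin psi_lin. Qed.

Lemma linear_mull (A : algType k) (c : A) : linear (fun x : A => c * x).
Proof. by move=> a x y; rewrite mulrDr scalerAr. Qed.

Lemma linear_mulr (A : algType k) (c : A) : linear (fun x : A => x * c).
Proof. by move=> a x y; rewrite mulrDl scalerAl. Qed.

Lemma bilin_linl (U V W : lmodType k) (f : U -> V -> W) :
  bilin f -> forall v, linear (f^~ v).
Proof. by case=> f_linl _ v a x y; exact: f_linl. Qed.

Lemma bilin_linr (U V W : lmodType k) (f : U -> V -> W) :
  bilin f -> forall u, linear (f u).
Proof. by case=> _ f_linr u a x y; exact: f_linr. Qed.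

Lemma bilin0l (U V W : lmodType k) (f : U -> V -> W) v : bilin f -> f 0 v = 0.
Proof. by move/bilin_linl/(_ v)/lin0. Qed.

Lemma bilinZl (U V W : lmodType k) (f : U -> V -> W) a u v :
  bilin f -> f (a *: u) v = a *: f u v.
Proof. by move/bilin_linl/(_ v)/linZ. Qed.

Lemma bilin_compl (X U V W : lmodType k) (phi : X -> U) (f : U -> V -> W) :
  linear phi -> bilin f -> bilin (fun x v => f (phi x) v).
Proof.
by move=> phi_lin [f_linl f_linr]; split=> a *; rewrite ?phi_lin ?f_linl ?f_linr.
Qed.

Lemma bilin_compr (X U V W : lmodType k) (phi : X -> V) (f : U -> V -> W) :
  linear phi -> bilin f -> bilin (fun u x => f u (phi x)).
Proof.
by move=> phi_lin [f_linl f_linr]; split=> a *; rewrite ?phi_lin ?f_linl ?f_linr.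
Qed.

Lemma bilin_flip (U V W : lmodType k) (f : U -> V -> W) :
  bilin f -> bilin (fun v u => f u v).
Proof. by case=> f_linl f_linr; split=> a *; rewrite ?f_linl ?f_linr. Qed.

Lemma bilin_mul (A : algType k) : bilin (fun x y : A => x * y).
Proof. by split=> a *; [exact: linear_mulr | exact: linear_mull]. Qed.

Section Modules.
Variables (A : algType k) (P : A -> Prop).

Definition balanced (M W : lmodType k) (act : M -> A -> M) (f : M -> A -> W) :=
  forall m a b, P b -> f (act m b) a = f m (b * a).

Lemma rmod_mulr : rmod_axioms P *%R.
Proof.
split=> [m b b' _ _ | m | a m m' b _ | a m b b' _ _]; first exact: mulrA.
- exact: mulr1.
- exact: linear_mulr.
- exact: linear_mull.
Qed.

Lemma rmod_hom0 (M N : lmodType k) (actM : M -> A -> M) (actN : N -> A -> N) :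
  rmod_axioms P actN -> rmod_hom P actM actN (fun _ => 0).
Proof.
case=> _ _ actN_lin _; split=> [a m m' | m b Pb]; first by rewrite scaler0 addr0.
by rewrite (@lin0 _ _ (actN^~ b)) // => a n n'; exact: actN_lin.
Qed.

Lemma teqM_map (M N : lmodType k) (actM : M -> A -> M) (actN : N -> A -> N)
    (f : M -> N) (s t : seq (M * A)) :
  rmod_hom P actM actN f -> teqM P actM s t -> teqM P actN (tmap f s) (tmap f t).
Proof.
move=> [f_lin f_act] st W g g_bilin g_bal; rewrite !big_map.
apply: (st _ (fun m a => g (f m) a)) => [|m a b Pb]; first exact: bilin_compl.
by rewrite f_act // g_bal.
Qed.

Lemma teqM_tmap0 (M : lmodType k) (act : M -> A -> M) (s : seq (M * A)) :
  teqM P act (tmap (fun _ => 0) s) [::].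
Proof.
move=> W g g_bilin _; rewrite big_map big_nil big1 // => p _.
exact: bilin0l.
Qed.

Section FaithfulFlatness.
Hypothesis ff : faithfully_flat P.
Variables (M N : lmodType k) (actM : M -> A -> M) (actN : N -> A -> N) (f : M -> N).
Hypotheses (M_rmod : rmod_axioms P actM) (N_rmod : rmod_axioms P actN)
  (f_hom : rmod_hom P actM actN f).

Lemma faithfully_flat_inj :
  (forall s, teqM P actN (tmap f s) [::] -> teqM P actM s [::]) -> injective f.
Proof.
move=> tmap_inj.
have [_ ker_trivial] := ff M_rmod M_rmod N_rmod (rmod_hom0 actM M_rmod) f_hom.
have ker0 m : f m = 0 -> m = 0.
  suff exact_at : forall m, f m = 0 <-> exists m' : M, 0 = m.
    by case/exact_at=> m' <-.
  apply: ker_trivial => s; split=> [/tmap_inj s0 | [s' s's]].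
    by exists [::] => W g g_bilin g_bal; rewrite (s0 W g g_bilin g_bal).
  move=> W g g_bilin g_bal; have := teqM_map f_hom s's g_bilin g_bal.
  rewrite !big_map big_nil /= => <-; apply: big1 => p _.
  by rewrite (lin0 f_hom.1); exact: bilin0l.
move=> x y fxy; apply/eqP; rewrite -subr_eq0; apply/eqP/ker0.
by rewrite (linB f_hom.1) fxy subrr.
Qed.

Lemma faithfully_flat_surj :
  (forall s, exists s', teqM P actN (tmap f s') s) -> forall n, exists m, f m = n.
Proof.
move=> tmap_surj n.
have [_ im_full] := ff M_rmod N_rmod N_rmod f_hom (rmod_hom0 actN N_rmod).
suff exact_at : forall n, (0 : N) = 0 <-> exists m, f m = n by exact/exact_at.
by apply: im_full => s; split=> _; [exact: tmap_surj | exact: teqM_tmap0].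
Qed.
End FaithfulFlatness.
End Modules.

Section Automorphisms.
Variables (H A : algType k) (delta : A -> seq (A * H)).

Lemma AutH_id : AutH delta id.
Proof.
split=> //; first by move=> x W f _; rewrite big_map.
by split=> // b Bb; exists b.
Qed.

Lemma AutH_comp F G : AutH delta F -> AutH delta G -> AutH delta (G \o F).
Proof.
move=> [F_lin FM F1 F_comod [FB FB_inj FB_surj]].
move=> [G_lin GM G1 G_comod [GB GB_inj GB_surj]].
split=> [a x y | x y | | x W f f_bilin | ] /=.
- by rewrite F_lin G_lin.
- by rewrite FM GM.
- by rewrite F1 G1.
- rewrite (G_comod (F x) _ f f_bilin) !big_map.
  by have := F_comod x _ _ (bilin_compl G_lin f_bilin); rewrite big_map.
split=> [b Bb | b b' Bb Bb' /GB_inj GFb | b Bb].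
- exact/GB/FB.
- by apply: FB_inj => //; apply: GFb; exact: FB.
- have [b1 [Bb1 <-]] := GB_surj b Bb; have [b2 [Bb2 <-]] := FB_surj b1 Bb1.
  by exists b2.
Qed.

Lemma AutH_inv F G : AutH delta F -> cancel F G -> cancel G F -> AutH delta G.
Proof.
move=> [F_lin FM F1 F_comod [FB FB_inj FB_surj]] FK GK.
have G_lin : linear G by move=> a x y; apply: (can_inj FK); rewrite F_lin !GK.
split=> // [x y | | x W f f_bilin | ].
- by apply: (can_inj FK); rewrite FM !GK.
- by rewrite -F1 FK.
- have := F_comod (G x) _ _ (bilin_compl G_lin f_bilin).
  by rewrite GK !big_map => ->; apply: eq_bigr => p _; rewrite FK.
split=> [b Bb | b b' _ _ Gbb' | b Bb].
- by have [b' [Bb' <-]] := FB_surj b Bb; rewrite FK.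
- by rewrite -(GK b) -(GK b') Gbb'.
- by exists (F b); split; [exact: FB | exact: FK].
Qed.

Lemma Autver_id : Autver delta id.
Proof. by split; first exact: AutH_id. Qed.

Lemma Autver_comp F G : Autver delta F -> Autver delta G -> Autver delta (G \o F).
Proof.
move=> [FAut Ffix] [GAut Gfix]; split; first exact: AutH_comp.
by move=> b Bb /=; rewrite Ffix // Gfix.
Qed.

Lemma Autver_inv F G :
  Autver delta F -> AutH delta G -> cancel F G -> cancel G F -> Autver delta G.
Proof. by move=> [_ Ffix] GAut FK _; split=> // b Bb; rewrite -{1}(Ffix b Bb) FK. Qed.

End Automorphisms.

Section HopfGalois.
Variables (H A : algType k) (Delta : H -> seq (H * H)) (eps : H -> k)
  (delta : A -> seq (A * H)) (tau : H -> seq (A * A)).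
Hypotheses (comod : is_comod_alg Delta eps delta) (galois : hopf_galois delta)
  (central : forall b x, coinv delta b -> b * x = x * b)
  (translation : translation_map delta tau).
Local Notation B := (coinv delta).

Lemma coactionD a x y :
  teq (delta (a *: x + y)) (tmap ( *:%R a) (delta x) ++ delta y).
Proof. by case: comod. Qed.

Lemma coaction_counit x : \sum_(p <- delta x) eps p.2 *: p.1 = x.
Proof. by case: comod. Qed.

Lemma coactionM x y :
  teq (delta (x * y)) [seq (p.1 * q.1, p.2 * q.2) | p <- delta x, q <- delta y].
Proof. by case: comod. Qed.

Lemma coinv1 : B 1.
Proof. by case: comod. Qed.

Lemma coinvM b b' : B b -> B b' -> B (b * b').
Proof.
move=> Bb Bb' W f f_bilin; rewrite (coactionM b b' f_bilin) big_allpairs_dep big_seq1 /=.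
have := Bb _ _ (bilin_compl (linear_mulr b') f_bilin); rewrite big_seq1 /= => <-.
apply: eq_bigr => p _.
have := Bb' _ _ (bilin_compr (linear_mull p.2) (bilin_compl (linear_mull p.1) f_bilin)).
by rewrite big_seq1 /= mulr1.
Qed.

Lemma coinv_lin a b b' : B b -> B b' -> B (a *: b + b').
Proof.
move=> Bb Bb' W f f_bilin.
rewrite (coactionD a b b' f_bilin) big_cat big_map /= (Bb' _ _ f_bilin) !big_seq1 /=.
rewrite (proj1 f_bilin); congr (_ + _).
have := Bb _ _ f_bilin; rewrite big_seq1 /= => <-; rewrite scaler_sumr.
by apply: eq_bigr => p _; exact: bilinZl.
Qed.

Lemma chi_inj s t : teq (chi delta s) (chi delta t) -> teqB B s t.
Proof. by move: galois => /= [_ + _]; apply. Qed.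

Lemma sum_chi (W : lmodType k) (f : A -> H -> W) s :
  \sum_(p <- chi delta s) f p.1 p.2 =
  \sum_(p <- s) \sum_(q <- delta p.2) f (p.1 * q.1) q.2.
Proof. exact: big_allpairs_dep. Qed.

Lemma sum_translation (W : lmodType k) (f : A -> H -> W) h : bilin f ->
  \sum_(q <- tau h) \sum_(r <- delta q.2) f (q.1 * r.1) r.2 = f 1 h.
Proof. by move=> f_bilin; have := translation h f_bilin; rewrite sum_chi big_seq1. Qed.

Lemma translation_coaction y :
  teqB B [seq (p.1 * q.1, q.2) | p <- delta y, q <- tau p.2] [:: (1, y)].
Proof.
apply: chi_inj => W f f_bilin; rewrite !sum_chi big_allpairs_dep big_seq1 /=.
apply: eq_bigr => p _; rewrite mul1r.
have := sum_translation p.2 (bilin_compl (linear_mull p.1) f_bilin).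
rewrite /= mulr1 => <-.
by apply: eq_bigr => q _; apply: eq_bigr => r _; rewrite mulrA.
Qed.

Lemma translation_linear (W : lmodType k) (g : A -> A -> W) :
  bilin g -> balanced B *%R g -> linear (fun h => \sum_(q <- tau h) g q.1 q.2).
Proof.
move=> g_bilin g_bal a h h'.
have tauD : teqB B (tau (a *: h + h')) (tmap ( *:%R a) (tau h) ++ tau h').
  apply: chi_inj => W' f f_bilin.
  rewrite !sum_chi big_cat big_map /= !sum_translation // (proj2 f_bilin).
  rewrite -(sum_translation h f_bilin) scaler_sumr; congr (_ + _).
  apply: eq_bigr => q _; rewrite scaler_sumr; apply: eq_bigr => r _.
  by rewrite -scalerAl (bilinZl _ _ _ f_bilin).
rewrite (tauD _ _ g_bilin g_bal) big_cat big_map scaler_sumr; congr (_ + _).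
by apply: eq_bigr => q _; exact: bilinZl.
Qed.

Lemma bilin_translation (U W : lmodType k) (g : U -> A -> A -> W) :
  (forall u, bilin (g u)) -> (forall u, balanced B *%R (g u)) ->
  (forall v w, linear (fun u => g u v w)) ->
  bilin (fun u h => \sum_(q <- tau h) g u q.1 q.2).
Proof.
move=> g_bilin g_bal g_lin; split=> [a u u' h | a u h h'].
  by rewrite scaler_sumr -big_split; apply: eq_bigr => q _; exact: g_lin.
exact: translation_linear.
Qed.

Lemma translation_counit h : scalar eps -> \sum_(q <- tau h) q.1 * q.2 = eps h *: 1.
Proof.
move=> eps_lin.
have counit_bilin : bilin (fun (u : A) (x : H) => eps x *: u).
  by split=> a *; rewrite ?eps_lin (scalerDr, scalerDl) // !scalerA // mulrC.
rewrite -(sum_translation h counit_bilin); apply: eq_bigr => q _.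
rewrite -{1}(coaction_counit q.2) mulr_sumr.
by apply: eq_bigr => r _; rewrite -scalerCA -scalerAl.
Qed.

Lemma balanced_flip (W : lmodType k) (f : A -> A -> W) :
  balanced B *%R f -> balanced B *%R (fun u v => f v u).
Proof. by move=> f_bal m a b Bb /=; rewrite central // f_bal // central. Qed.

Section CoactionMorphism.
Variable F : A -> A.
Hypotheses (F_lin : linear F) (FM : forall x y, F (x * y) = F x * F y) (F1 : F 1 = 1)
  (F_comod : forall x, teq (delta (F x)) (tmap F (delta x))).

Lemma translationF x y :
  teqB B [:: (x, y)] [seq (x * p.1 * F q.1, F q.2) | p <- delta y, q <- tau p.2].
Proof.
apply: chi_inj => W f f_bilin; rewrite !sum_chi big_seq1 big_allpairs_dep /=.
apply: eq_bigr => p _; symmetry.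
transitivity (\sum_(q <- tau p.2) \sum_(r <- delta q.2)
                f (x * p.1 * F (q.1 * r.1)) r.2).
  apply: eq_bigr => q _.
  rewrite (F_comod q.2 (bilin_compl (linear_mull (x * p.1 * F q.1)) f_bilin)) big_map.
  by apply: eq_bigr => r _; rewrite FM !mulrA.
have := sum_translation p.2
  (bilin_compl (linear_comp F_lin (linear_mull (x * p.1))) f_bilin).
by rewrite /= F1 mulr1.
Qed.

Lemma Xelt_F c : teqBtw B F (Xelt delta tau F (F c)) [:: (F 1, c)].
Proof.
move=> W f f_bilin f_bal.
have F_hom : rmod_hom B *%R (fun x b => x * F b) F by split=> // m b _; exact: FM.
have Psi_bilin : bilin (fun u h => \sum_(q <- tau h) f (u * F q.1) q.2).
  apply: (bilin_translation (g := fun u v w => f (u * F v) w))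
    => [u | u v w b Bb | v w] /=.
  - exact: bilin_compl (linear_comp F_lin (linear_mull u)) f_bilin.
  - by rewrite FM mulrA f_bal.
  - exact: bilin_linl (bilin_compl (linear_mulr (F v)) f_bilin) w.
transitivity (\sum_(t <- tmap F [seq (p.1 * q.1, q.2) | p <- delta c, q <- tau p.2])
               f t.1 t.2).
  rewrite /Xelt big_allpairs_dep.
  have := F_comod c Psi_bilin; rewrite big_map /= => ->.
  rewrite big_map big_allpairs_dep; apply: eq_bigr => p _.
  by apply: eq_bigr => q _; rewrite FM.
exact: (teqM_map F_hom (translation_coaction c) f_bilin f_bal).
Qed.

(* A representative of the preimage of z (x) x under
   F (x)_B id : A' (x)_B A -> A (x)_B A. *)
Definition preimF (z x : A) : seq (A * A) :=
  [seq (q.2, x * p.1 * F q.1) | p <- delta z, q <- tau p.2].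

Lemma preimFK z x : teqB B (tmap F (preimF z x)) [:: (z, x)].
Proof.
move=> W f f_bilin f_bal; rewrite big_map big_allpairs_dep.
have := translationF x z (bilin_flip f_bilin) (balanced_flip f_bal).
by rewrite !big_seq1 big_allpairs_dep /= => ->.
Qed.

Lemma tmapF_surj s : exists s', teqB B (tmap F s') s.
Proof.
exists (flatten [seq preimF p.1 p.2 | p <- s]) => W f f_bilin f_bal.
rewrite map_flatten big_flatten /= -map_comp big_map.
by apply: eq_bigr => p _; rewrite /= (preimFK p.1 p.2 f_bilin f_bal) big_seq1.
Qed.

Hypothesis FB : forall b, B b -> B (F b).

Section PreimageSums.
Variables (W : lmodType k) (f : A -> A -> W) (f_bilin : bilin f)
  (f_bal : forall m a b, B b -> f (m * b) a = f m (F b * a)).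

Let f_twist c u v b : B b -> f v (c * F (u * b)) = f (b * v) (c * F u).
Proof. by move=> Bb; rewrite FM mulrA -(central _ (FB Bb)) -f_bal // (central _ Bb). Qed.

Let Phi_bilin x : bilin (fun u h => \sum_(q <- tau h) f q.2 (x * u * F q.1)).
Proof.
apply: (bilin_translation (g := fun u v w => f w (x * u * F v)))
  => [u | u v w b Bb | v w] /=.
- exact: bilin_flip (bilin_compr (linear_comp F_lin (linear_mull (x * u))) f_bilin).
- exact: f_twist.
- exact: linear_comp (linear_comp (linear_mull x) (linear_mulr (F v)))
    (bilin_linr f_bilin w).
Qed.

Lemma sum_preimF z x :
  \sum_(t <- preimF z x) f t.1 t.2 =
  \sum_(p <- delta z) \sum_(q <- tau p.2) f q.2 (x * p.1 * F q.1).
Proof. exact: big_allpairs_dep. Qed.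

Lemma sum_preimF_bilin : bilin (fun z x => \sum_(t <- preimF z x) f t.1 t.2).
Proof.
split=> [a z z' x | a z x x']; rewrite !sum_preimF.
- rewrite (coactionD a z z' (Phi_bilin x)) big_cat big_map scaler_sumr /=.
  by congr (_ + _); apply: eq_bigr => p _; exact: (bilinZl _ _ _ (Phi_bilin x)).
- rewrite scaler_sumr -big_split; apply: eq_bigr => p _.
  rewrite scaler_sumr -big_split; apply: eq_bigr => q _ /=.
  by rewrite !mulrDl -!scalerAl (proj2 f_bilin).
Qed.

Lemma sum_preimF_bal : balanced B *%R (fun z x => \sum_(t <- preimF z x) f t.1 t.2).
Proof.
move=> m a b Bb; rewrite !sum_preimF (coactionM m b (Phi_bilin a)) big_allpairs_dep /=.
apply: eq_bigr => p _.
have := Bb _ _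
  (bilin_compr (linear_mull p.2) (bilin_compl (linear_mull p.1) (Phi_bilin a))).
rewrite big_seq1 /= mulr1 => ->.
by apply: eq_bigr => q _; rewrite -(central p.1 Bb) mulrA (central a Bb).
Qed.

Lemma sum_preimF_F y x : \sum_(t <- preimF (F y) x) f t.1 t.2 = f y x.
Proof.
have g_bilin : bilin (fun u v => f v (x * F u)).
  exact: bilin_flip (bilin_compr (linear_comp F_lin (linear_mull x)) f_bilin).
have g_bal : balanced B *%R (fun u v => f v (x * F u)).
  by move=> u v b Bb; exact: f_twist.
rewrite sum_preimF; have := F_comod y (Phi_bilin x); rewrite big_map /= => ->.
have := translation_coaction y g_bilin g_bal.
rewrite big_seq1 big_allpairs_dep /= F1 mulr1 => <-.
by apply: eq_bigr => p _; apply: eq_bigr => q _; rewrite FM mulrA.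
Qed.

End PreimageSums.

Hypotheses (FB_inj : forall b b', B b -> B b' -> F b = F b' -> b = b')
  (FB_surj : forall b, B b -> exists b', B b' /\ F b' = b).

(* (F|_B)^-1; its values outside B are irrelevant. *)
Definition invFB (c : A) : A := epsilon (inhabits 0) (fun b => B b /\ F b = c).

Lemma invFB_spec c : B c -> B (invFB c) /\ F (invFB c) = c.
Proof. by move/FB_surj/(epsilon_spec (inhabits 0)). Qed.

Lemma invFBK b : B b -> invFB (F b) = b.
Proof. by move=> Bb; have [BFb FFb] := invFB_spec (FB Bb); exact: FB_inj. Qed.

Lemma rmod_twist : rmod_axioms B (fun m c => m * invFB c).
Proof.
split=> [m b b' Bb Bb' | m | a m m' b _ | a m b b' Bb Bb'].
- have [[Bib Fib] [Bib' Fib']] := (invFB_spec Bb, invFB_spec Bb').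
  have -> : b * b' = F (invFB b * invFB b') by rewrite FM Fib Fib'.
  by rewrite invFBK ?mulrA //; exact: coinvM.
- by rewrite -F1 invFBK ?mulr1 //; exact: coinv1.
- exact: linear_mulr.
- have [[Bib Fib] [Bib' Fib']] := (invFB_spec Bb, invFB_spec Bb').
  have -> : a *: b + b' = F (a *: invFB b + invFB b') by rewrite F_lin Fib Fib'.
  rewrite invFBK; [exact: linear_mull | exact: coinv_lin].
Qed.

Lemma rmod_hom_F : rmod_hom B (fun m c => m * invFB c) *%R F.
Proof. by split=> // m b Bb; rewrite FM (invFB_spec Bb).2. Qed.

Lemma tmapF_inj s : teqB B (tmap F s) [::] -> teqM B (fun m c => m * invFB c) s [::].
Proof.
move=> Fs0 W f f_bilin f_bal.
have f_balF m a b : B b -> f (m * b) a = f m (F b * a).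
  by move=> Bb; rewrite -{1}(invFBK Bb) f_bal //; exact: FB.
transitivity (\sum_(p <- tmap F s) \sum_(t <- preimF p.1 p.2) f t.1 t.2).
  by rewrite big_map; apply: eq_bigr => p _; rewrite sum_preimF_F.
have := Fs0 _ _ (sum_preimF_bilin f_bilin f_balF) (sum_preimF_bal f_bilin f_balF).
by rewrite !big_nil /= => ->.
Qed.

End CoactionMorphism.

Lemma AutH_bij F : faithfully_flat B -> AutH delta F -> bijective F.
Proof.
move=> ff [F_lin FM F1 F_comod [FB FB_inj FB_surj]].
have F_hom := rmod_hom_F F_lin FM FB_surj.
have twist_rmod := rmod_twist F_lin FM F1 FB FB_inj FB_surj.
have F_inj : injective F.
  apply: (faithfully_flat_inj ff twist_rmod (rmod_mulr B) F_hom) => s.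
  exact: tmapF_inj.
have F_surj : forall a, exists x, F x = a.
  apply: (faithfully_flat_surj ff twist_rmod (rmod_mulr B) F_hom) => s.
  exact: tmapF_surj.
pose Finv a := epsilon (inhabits 0) (fun x => F x = a).
have FinvK : cancel Finv F := fun a => epsilon_spec _ _ (F_surj a).
by exists Finv => // x; apply: F_inj; rewrite FinvK.
Qed.

Lemma Xelt_inv F Finv : scalar eps -> AutH delta F -> cancel F Finv -> cancel Finv F ->
  forall a s, teqBtw B F (Xelt delta tau F a) (tmap F s) ->
  Finv a = \sum_(p <- s) p.1 * p.2.
Proof.
move=> eps_lin FAut FK FinvK a s Xs.
have [Finv_lin Finv_mul _ _ _] := AutH_inv FAut FK FinvK.
have Finv_bal : forall m y b, B b -> Finv (m * F b) * y = Finv m * (b * y).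
  by move=> m y b _; rewrite Finv_mul FK mulrA.
have := Xs _ _ (bilin_compl Finv_lin (bilin_mul A)) Finv_bal.
rewrite /Xelt big_allpairs_dep big_map /= => Xs_mul.
transitivity (\sum_(p <- s) Finv (F p.1) * p.2).
  2: by apply: eq_bigr => p _; rewrite FK.
rewrite -Xs_mul -{1}(coaction_counit a) (lin_sum Finv_lin); apply: eq_bigr => p _.
rewrite (linZ Finv_lin) -(mulr1 (Finv p.1)) scalerAr -(translation_counit p.2 eps_lin).
by rewrite mulr_sumr; apply: eq_bigr => q _; rewrite Finv_mul FK mulrA.
Qed.

End HopfGalois.
End HopfGaloisAutomorphisms.

Theorem proposition2p6 (R : realType) (H A : algType R[i])
    (Delta : H -> seq (H * H)) (eps : H -> R[i]) (S : H -> H)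
    (delta : A -> seq (A * H)) (tau : H -> seq (A * A)) :
  is_hopf Delta eps S ->
  is_comod_alg Delta eps delta ->
  hopf_galois delta ->
  faithfully_flat (coinv delta) ->
  (forall b x, coinv delta b -> b * x = x * b) ->
  translation_map delta tau ->
  [/\ (* Aut_H(A) is a group for F.G := G o F, with unit id *)
      AutH delta id,
      forall F G, AutH delta F -> AutH delta G -> AutH delta (G \o F),
      (* inverses, with the explicit formula *)
      forall F, AutH delta F ->
        (forall a, exists s : seq (A * A),
           (forall p, p \in s -> coinv delta p.1) /\
           teqBtw (coinv delta) F (Xelt delta tau F a)
                  [seq (F p.1, p.2) | p <- s]) /\
        (exists Finv : A -> A,
           [/\ AutH delta Finv,
               forall a, Finv (F a) = a,
               forall a, F (Finv a) = a
             & forall a (s : seq (A * A)),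
                 (forall p, p \in s -> coinv delta p.1) ->
                 teqBtw (coinv delta) F (Xelt delta tau F a)
                        [seq (F p.1, p.2) | p <- s] ->
                 Finv a = \sum_(p <- s) p.1 * p.2]),
      (* Aut_ver(A) is a subgroup *)
      Autver delta id /\
        (forall F G, Autver delta F -> Autver delta G -> Autver delta (G \o F))
    & forall F G, Autver delta F -> AutH delta G ->
        (forall a, G (F a) = a) -> (forall a, F (G a) = a) -> Autver delta G].
Proof.
move=> [_ _ _ [eps_lin _ _] _] comod galois ff central translation.
split; [exact: AutH_id | exact: AutH_comp | move=> F FAut | | exact: Autver_inv].
- have [Finv FK FinvK] := AutH_bij comod galois central translation ff FAut.
  move: (FAut) => [F_lin FM F1 F_comod _].
  split=> [a | ].
    exists [:: (1, Finv a)]; split.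
      by move=> p /[!inE] /eqP ->; exact: coinv1 comod.
    by rewrite -{1}(FinvK a); exact: Xelt_F.
  exists Finv; split=> //; first exact: AutH_inv FAut FK FinvK.
  by move=> a s _; exact: (Xelt_inv comod translation eps_lin FAut FK FinvK).
- by split; [exact: Autver_id | exact: Autver_comp].
Qed.
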